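(* Let $\mathcal{A}$ be a finite abelian group with $|\mathcal{A}|\ge 3$. Let $H_1(p_1,p_2)$ denote a graph consisting of a triangle $v_2v_3v_4$, a vertex $v_1$ adjacent to $v_2$, $p_1\ge0$ pendant vertices adjacent to $v_1$, $p_2\ge 0$ pendant vertices adjacent to $v_2$, and $t\ge 1$ further neighbours of $v_1$, each of which is a support vertex all of whose neighbours other than $v_1$ are pendant vertices. Consider the case $p_1=0$. Then $H_1(0,p_2)$ is $\mathcal{A}$-vertex magic if and only if $p_2=0$ and the following holds: if $v_1$ has a weak support neighbour, there exists $g\in\mathcal{A}\setminus\{0\}$ with $d(v_1)\not\equiv 1$, $d(v_1)\not\equiv 2$, $2d(v_1)\not\equiv 2$ and $2d(v_1)\not\equiv 3 \pmod{o(g)}$; and if every support neighbour of $v_1$ is a strong support vertex, there exists $g\in\mathcal{A}\setminus\{0\}$ with $d(v_1)\not\equiv 1$, $d(v_1)\not\equiv 2$ and $2d(v_1)\not\equiv 3\pmod{o(g)}$.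
   Context: A pendant vertex has degree $1$; a support vertex is a vertex adjacent to a pendant vertex; it is a weak support vertex if it is adjacent to exactly one pendant vertex and a strong support vertex if adjacent to at least two. $d(v)$ is the degree of $v$ and $o(g)$ the order of $g$. A map $\ell:V(G)\to\mathcal{A}\setminus\{0\}$ is an $\mathcal{A}$-vertex magic labeling if there is $\mu\in\mathcal{A}$ with $\sum_{u\in N(v)}\ell(u)=\mu$ for every vertex $v$; $G$ is $\mathcal{A}$-vertex magic if such a labeling exists. *)

From mathcomp Require Import all_boot all_order all_algebra all_fingroup.
Set Implicit Arguments. Unset Strict Implicit. Unset Printing Implicit Defensive.
Import GRing.Theory.

Definition vertex_magic_labeling (A : zmodType) (V : finType) (adj : rel V)
    (l : V -> A) : Prop :=
  (forall v, l v != 0%R) /\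
  exists mu : A, forall v, (\sum_(u | adj v u) l u)%R = mu.

Definition vertex_magic (A : zmodType) (V : finType) (adj : rel V) : Prop :=
  exists l : V -> A, vertex_magic_labeling adj l.

Definition deg (V : finType) (adj : rel V) (v : V) : nat := #|[set u | adj v u]|.

(* The graph H_1(0,p2) with t support neighbours of v1, the i-th of which
   carries k i pendant vertices.
   Vertex type:
     inl (inl a), a : 'I_4     : core vertices v1 (a=0), v2 (a=1), v3 (a=2), v4 (a=3)
     inl (inr j), j : 'I_p2    : pendant vertices adjacent to v2
     inr (inl i), i : 'I_t     : support neighbours u_i of v1
     inr (inr s), s = (i; j)   : the j-th pendant vertex adjacent to u_i *)
Definition H1V (p2 t : nat) (k : 'I_t -> nat) : finType :=
  (('I_4 + 'I_p2) + ('I_t + {i : 'I_t & 'I_(k i)}))%type.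

Definition H1edge (p2 t : nat) (k : 'I_t -> nat) (x y : H1V p2 k) : bool :=
  match x, y with
  | inl (inl a), inl (inl b) =>
      [|| ((a : nat) == 0) && ((b : nat) == 1),
          ((a : nat) == 1) && ((b : nat) == 2),
          ((a : nat) == 2) && ((b : nat) == 3)
        | ((a : nat) == 1) && ((b : nat) == 3)]
  | inl (inl a), inl (inr _) => (a : nat) == 1
  | inl (inl a), inr (inl _) => (a : nat) == 0
  | inr (inl i), inr (inr s) => tag s == i
  | _, _ => false
  end.

Definition H1adj (p2 t : nat) (k : 'I_t -> nat) : rel (H1V p2 k) :=
  fun x y => H1edge x y || H1edge y x.

Definition H1v1 (p2 t : nat) (k : 'I_t -> nat) : H1V p2 k :=
  inl (inl (@Ordinal 4 0 isT)).

From mathcomp Require Import all_boot all_order all_algebra all_fingroup.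
From mathcomp Require Import cyclic zify.
Set Implicit Arguments. Unset Strict Implicit. Unset Printing Implicit Defensive.
Import GRing.Theory.
Local Open Scope ring_scope.

(* A pendant vertex forces the magic constant mu as the label of its support
   vertex.  Writing t = d(v1) - 1, the neighbourhoods of v1, v4, v3, v2 and of
   a weak support vertex then force the labels -(t-1)mu on v2, t mu on v3 and
   v4, -(2t-1)mu on v1 and 2t mu on the pendant of a weak support vertex, while
   a pendant at v2 would force the label 0 on v4.  Conversely these labels form
   a magic labeling as soon as they are nonzero: the pendants of a strong
   support vertex share 2t mu as a sum of nonzero terms, which |A| >= 3 allows.
   Finally, a mu != 0 exactly when a is not divisible by o(mu). *)

Lemma exists_neq2 (T : finType) (x y : T) :
  (2 < #|T|)%N -> exists z, (z != x) && (z != y).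
Proof.
move=> T_gt2; case: (pickP [pred z | (z != x) && (z != y)]) => [z xyz | no_z].
  by exists z.
have : (#|[set: T]| <= #|[set x; y]|)%N.
  apply/subset_leq_card/subsetP => z _.
  by move: (no_z z) => /= /negbT; rewrite negb_and !negbK !inE.
by rewrite cardsT cards2 leqNgt (leq_trans _ T_gt2) // ltnS; case: (_ != _).
Qed.

Lemma exists_nonzero_summands (A : finZmodType) (c : A) m :
  (2 < #|A|)%N -> (0 < m)%N -> (m = 1%N -> c != 0) ->
  exists f : 'I_m -> A, (forall j, f j != 0) /\ \sum_j f j = c.
Proof.
move=> A_gt2; elim: m c => [//|[|m] IHm] c _ c_neq0.
  by exists (fun=> c); split=> [_|]; [exact: c_neq0 | rewrite big_ord1].
have [a /andP[a_neq0 a_neqc]] := exists_neq2 0 c A_gt2.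
have [|f [f_neq0 sum_f]] := IHm (c - a) isT; first by rewrite subr_eq0 eq_sym.
exists (fun j => if unlift ord0 j is Some j' then f j' else a); split.
  by move=> j; case: (unlift ord0 j).
rewrite big_ord_recl /= unlift_none (eq_bigr f) => [|j _]; last by rewrite liftK.
by rewrite sum_f addrC subrK.
Qed.

Lemma addr_mulrn_eq_id (V : zmodType) (x a : V) n :
  (0 < n)%N -> (x + a *+ n = a) <-> (x = - (a *+ n.-1)).
Proof.
case: n => // n _; rewrite mulrSr addrA.
split=> [x_eq | ->]; last by rewrite addNr add0r.
by apply/eqP; rewrite -addr_eq0; apply/eqP/(addIr a); rewrite add0r.
Qed.

Lemma eqn_mod_order (A : finZmodType) (g : A) a b :
  (b <= a)%N -> (a == b %[mod #[g]%g]) = (g *+ (a - b) == 0).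
Proof. by move=> le_ba; rewrite eqn_mod_dvd // order_dvdn. Qed.

Lemma ord4_ind (P : 'I_4 -> Prop) :
  P ord0 -> P (lift ord0 ord0) -> P (lift ord0 (lift ord0 ord0)) ->
  P (lift ord0 (lift ord0 (lift ord0 ord0))) -> forall a, P a.
Proof.
move=> P0 P1 P2 P3 [[|[|[|[|a]]]] a_lt4] //;
  [ apply: eq_ind P0 _ _ | apply: eq_ind P1 _ _
  | apply: eq_ind P2 _ _ | apply: eq_ind P3 _ _ ]; exact: val_inj.
Qed.

Section H1Graph.
Variables (p2 t : nat) (k : 'I_t -> nat).
Notation V := (H1V p2 k).
Notation adj := (@H1adj p2 t k).
Notation v1 := (inl (inl ord0) : V).
Notation v2 := (inl (inl (lift ord0 ord0)) : V).
Notation v3 := (inl (inl (lift ord0 (lift ord0 ord0))) : V).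
Notation v4 := (inl (inl (lift ord0 (lift ord0 (lift ord0 ord0)))) : V).
Notation w j := (inl (inr j) : V).
Notation u i := (inr (inl i) : V).
Notation x s := (inr (inr s) : V).
Notation pendant i j := (x (Tagged (fun i => 'I_(k i)) j)).

Lemma H1v1E : H1v1 p2 k = v1. Proof. by congr (inl (inl _)); apply: val_inj. Qed.

Lemma sum_tagged (A : nmodType) (G : V -> A) i :
  \sum_(s : {i : 'I_t & 'I_(k i)}) (if tag s == i then G (x s) else 0) =
  \sum_(j < k i) G (pendant i j).
Proof.
rewrite -big_mkcond.
transitivity (\sum_(i' | i' == i) \sum_(j < k i') G (pendant i' j)); last first.
  by rewrite big_pred1_eq.
rewrite (sig_big_dep (fun i' => i' == i) (fun _ _ => true)) /=.
by apply: congr_big => // -[i' j] /=; case: (i' == i).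
Qed.

Section NeighbourhoodSums.
Variables (A : nmodType) (G : V -> A).

Local Ltac expand_nbhd :=
  rewrite big_mkcond !big_sumType /H1adj /= !big_ord_recl big_ord0 /= ?orbF
          ?sum_tagged !big1_eq ?addr0 ?add0r /=.

Lemma sum_adj_v1 : \sum_(v | adj v1 v) G v = G v2 + \sum_(i < t) G (u i).
Proof. by expand_nbhd. Qed.
Lemma sum_adj_v2 :
  \sum_(v | adj v2 v) G v = G v1 + G v3 + G v4 + \sum_(j < p2) G (w j).
Proof. by expand_nbhd; rewrite !addrA. Qed.
Lemma sum_adj_v2_no_w : p2 = 0%N -> \sum_(v | adj v2 v) G v = G v1 + G v3 + G v4.
Proof.
move=> p2_eq0; rewrite sum_adj_v2 big1 ?addr0 // => j _.
by have : (j < 0)%N by rewrite -p2_eq0.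
Qed.
Lemma sum_adj_v3 : \sum_(v | adj v3 v) G v = G v2 + G v4.
Proof. by expand_nbhd. Qed.
Lemma sum_adj_v4 : \sum_(v | adj v4 v) G v = G v2 + G v3.
Proof. by expand_nbhd. Qed.
Lemma sum_adj_w j : \sum_(v | adj (w j) v) G v = G v2.
Proof. by expand_nbhd. Qed.
Lemma sum_adj_u i : \sum_(v | adj (u i) v) G v = G v1 + \sum_(j < k i) G (pendant i j).
Proof. by expand_nbhd; under eq_bigr do rewrite orbF; rewrite sum_tagged. Qed.
Lemma sum_adj_x s : \sum_(v | adj (x s) v) G v = G (u (tag s)).
Proof.
by expand_nbhd; rewrite -big_mkcond; apply: big_pred1 => j /=; rewrite eq_sym.
Qed.

End NeighbourhoodSums.

Lemma deg_H1v1 : deg adj (H1v1 p2 k) = t.+1.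
Proof.
rewrite /deg -sum1_card H1v1E (eq_bigl (adj v1)); last by move=> v; rewrite inE.
by rewrite (sum_adj_v1 (fun=> 1%N)) sum1_card card_ord.
Qed.

Definition H1_magic_constant (A : zmodType) (mu : A) : Prop :=
  [/\ mu != 0, mu *+ t != 0, mu *+ t.-1 != 0, mu *+ t.*2.-1 != 0
    & (exists i, k i = 1%N) -> mu *+ t.*2 != 0].

Section ForcedLabels.
Variables (A : zmodType) (l : V -> A) (mu : A).
Hypotheses (t_gt0 : (0 < t)%N) (k_gt0 : forall i, (0 < k i)%N).
Hypothesis l_neq0 : forall v, l v != 0.
Hypothesis l_sum : forall v, \sum_(y | adj v y) l y = mu.

Lemma forced_label_u i : l (u i) = mu.
Proof. by rewrite -(l_sum (pendant i (Ordinal (k_gt0 i)))) sum_adj_x. Qed.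

Lemma forced_p2_eq0 : p2 = 0%N.
Proof.
case: (posnP p2) => // p2_gt0.
have l_v2 : l v2 = mu by rewrite -(l_sum (w (Ordinal p2_gt0))) sum_adj_w.
have := l_sum v3; rewrite sum_adj_v3 l_v2 -[RHS]addr0 => /addrI l_v4.
by have := l_neq0 v4; rewrite l_v4 eqxx.
Qed.

Lemma forced_label_v2 : l v2 = - (mu *+ t.-1).
Proof.
apply/addr_mulrn_eq_id => //; rewrite -[RHS](l_sum v1) sum_adj_v1.
by rewrite (eq_bigr _ (fun i _ => forced_label_u i)) sumr_const card_ord.
Qed.

Lemma forced_label_v2_add : l v2 + mu *+ t = mu.
Proof. exact/addr_mulrn_eq_id/forced_label_v2. Qed.

Lemma forced_label_v3 : l v3 = mu *+ t.
Proof. by apply: (addrI (l v2)); rewrite -sum_adj_v4 l_sum forced_label_v2_add. Qed.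

Lemma forced_label_v4 : l v4 = mu *+ t.
Proof. by apply: (addrI (l v2)); rewrite -sum_adj_v3 l_sum forced_label_v2_add. Qed.

Lemma forced_label_v1_add : l v1 + mu *+ t.*2 = mu.
Proof.
rewrite -addnn mulrnDr -{1}forced_label_v3 -forced_label_v4 addrA.
by rewrite -(l_sum v2) sum_adj_v2_no_w // forced_p2_eq0.
Qed.

Lemma forced_label_v1 : l v1 = - (mu *+ t.*2.-1).
Proof.
by apply/addr_mulrn_eq_id; [rewrite double_gt0 | exact: forced_label_v1_add].
Qed.

Lemma forced_label_weak_pendant i (ki1 : k i = 1%N) :
  l (pendant i (Ordinal (k_gt0 i))) = mu *+ t.*2.
Proof.
apply: (addrI (l v1)); rewrite forced_label_v1_add -(l_sum (u i)) sum_adj_u.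
rewrite (big_pred1 (Ordinal (k_gt0 i))) // => j /=.
have : (j < 1)%N by rewrite -ki1.
by rewrite ltnS leqn0 => /eqP j0; apply/esym/eqP/val_inj.
Qed.

Lemma forced_magic_constant : H1_magic_constant mu.
Proof.
split.
- by rewrite -(forced_label_u (Ordinal t_gt0)).
- by rewrite -forced_label_v3.
- by rewrite -oppr_eq0 -forced_label_v2.
- by rewrite -oppr_eq0 -forced_label_v1.
- by move=> [i ki1]; rewrite -(forced_label_weak_pendant ki1).
Qed.

End ForcedLabels.

Section LabelingConstruction.
Variables (A : finZmodType) (mu : A).
Hypotheses (A_gt2 : (2 < #|A|)%N) (t_gt0 : (0 < t)%N) (k_gt0 : forall i, (0 < k i)%N).
Hypotheses (p2_eq0 : p2 = 0%N) (mu_ok : H1_magic_constant mu).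

Lemma magic_labeling_of_constant : vertex_magic A adj.
Proof.
have [mu_neq0 mu_t mu_t1 mu_2t1 mu_2t] := mu_ok.
have /fin_all_exists2[f f_neq0 sum_f] i :
    exists2 f : 'I_(k i) -> A, forall j, f j != 0 & \sum_j f j = mu *+ t.*2.
  have [ki1 | f [f_neq0 sum_f]] :=
    exists_nonzero_summands (c := mu *+ t.*2) A_gt2 (k_gt0 i).
    by apply: mu_2t; exists i.
  by exists f.
have add_pred n : (0 < n)%N -> - (mu *+ n.-1) + mu *+ n = mu.
  by move=> n_gt0; apply/addr_mulrn_eq_id.
pose core := [:: - (mu *+ t.*2.-1); - (mu *+ t.-1); mu *+ t; mu *+ t].
pose l (v : V) := match v with
  | inl (inl a) => nth 0 core a
  | inl (inr _) | inr (inl _) => mu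
  | inr (inr s) => f (tag s) (tagged s)
  end.
have no_w (j : 'I_p2) : False by have : (j < 0)%N by rewrite -p2_eq0.
exists l; split.
  by case=> [[[[|[|[|[|a]]]] ?]|j]|[i|s]] //=; rewrite ?oppr_eq0.
exists mu; case=> [[a|j]|[i|s]]; last 3 first.
- by case: (no_w j).
- by rewrite sum_adj_u sum_f add_pred ?double_gt0.
- by rewrite sum_adj_x.
elim/ord4_ind: a.
- by rewrite sum_adj_v1 sumr_const card_ord add_pred.
- by rewrite sum_adj_v2_no_w //= -addrA -mulrnDr addnn add_pred ?double_gt0.
- by rewrite sum_adj_v3 add_pred.
- by rewrite sum_adj_v4 add_pred.
Qed.

End LabelingConstruction.

Lemma H1_vertex_magicP (A : finZmodType) :
  (2 < #|A|)%N -> (0 < t)%N -> (forall i, (0 < k i)%N) ->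
  vertex_magic A adj <-> p2 = 0%N /\ exists mu : A, H1_magic_constant mu.
Proof.
move=> A_gt2 t_gt0 k_gt0; split=> [[l [l_neq0 [mu l_sum]]] | [p2_eq0 [mu mu_ok]]].
  by split; [exact: forced_p2_eq0 l_sum | exists mu; exact: forced_magic_constant].
exact: magic_labeling_of_constant mu_ok.
Qed.

End H1Graph.

Lemma degree_congruences (A : finZmodType) (g : A) t : (0 < t)%N ->
  [/\ (t.+1 == 1 %[mod #[g]%g]) = (g *+ t == 0),
      (t.+1 == 2 %[mod #[g]%g]) = (g *+ t.-1 == 0),
      (2 * t.+1 == 2 %[mod #[g]%g]) = (g *+ t.*2 == 0)
    & (2 * t.+1 == 3 %[mod #[g]%g]) = (g *+ t.*2.-1 == 0)].
Proof.
move=> t_gt0; rewrite !eqn_mod_order ?mul2n ?doubleS; try lia.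
by rewrite !subSS !subn0 !subn1.
Qed.

Local Close Scope ring_scope.

Theorem proposition3p4 (A : finZmodType) (p2 t : nat) (k : 'I_t -> nat) :
  2 < #|A| -> 0 < t -> (forall i, 0 < k i) ->
  (vertex_magic A (@H1adj p2 t k) <->
   p2 = 0 /\
   ((exists i, k i = 1) ->
      let d := deg (@H1adj p2 t k) (H1v1 p2 k) in
      exists g : A, [/\ g != 0%R,
        d != 1 %[mod #[g]%g], d != 2 %[mod #[g]%g],
        2 * d != 2 %[mod #[g]%g] & 2 * d != 3 %[mod #[g]%g]]) /\
   ((forall i, 2 <= k i) ->
      let d := deg (@H1adj p2 t k) (H1v1 p2 k) in
      exists g : A, [/\ g != 0%R,
        d != 1 %[mod #[g]%g], d != 2 %[mod #[g]%g]
        & 2 * d != 3 %[mod #[g]%g]])).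
Proof.
move=> A_gt2 t_gt0 k_gt0; rewrite H1_vertex_magicP // deg_H1v1 /=.
split=> [[p2_eq0 [mu [mu_neq0 mu_t mu_t1 mu_2t1 mu_2t]]] | [p2_eq0 [weak strong]]].
  have [d_1 d_2 d2_2 d2_3] := degree_congruences mu t_gt0.
  split=> //; split=> [[i ki1] | _]; exists mu; rewrite d_1 d_2 ?d2_2 d2_3.
    by split=> //; apply: mu_2t; exists i.
  by split.
split=> //.
case: (boolP [exists i, k i == 1]) => [/existsP[i /eqP ki1] | /existsPn no_weak].
  case: (weak (ex_intro _ i ki1)) => g [g_neq0].
  have [-> -> -> ->] := degree_congruences g t_gt0 => g_t g_t1 g_2t g_2t1.
  by exists g; split.
have k_ge2 i : 1 < k i by rewrite ltn_neqAle eq_sym no_weak k_gt0.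
case: (strong k_ge2) => g [g_neq0].
have [-> -> _ ->] := degree_congruences g t_gt0 => g_t g_t1 g_2t1.
by exists g; split=> // -[i ki1]; move: (k_ge2 i); rewrite ki1.
Qed.
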